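(* Let $\alpha\in\{1/2,1\}$, $\beta\in(0,1]$, $\rho\in(0,1)$ and $\tilde\rho=\beta\rho$. The function $\Lambda\mapsto\mathbf M(\Lambda;\rho,\tilde\rho,\alpha)$ on $[0,\gamma_+]$, where $\gamma_+=\bigl(1+\sqrt{(\tilde\rho-\rho\tilde\rho)/(\rho-\rho\tilde\rho)}\bigr)^2$, is convex and attains its minimum at a unique point.
   Context: For $\gamma>0$, $\gamma_\pm=(1\pm\sqrt\gamma)^2$, $p_\gamma(t)=\frac{1}{2\pi\gamma t}\sqrt{(\gamma_+-t)(t-\gamma_-)}\mathbf 1_{[\gamma_-,\gamma_+]}(t)$ (Marčenko–Pastur density), $P_\gamma(x;k)=\int_x^{\gamma_+}t^kp_\gamma(t)dt$, and $\mathbf M(\Lambda;\rho,\tilde\rho,\alpha)=\rho+\tilde\rho-\rho\tilde\rho+(1-\tilde\rho)[\rho\Lambda^2+\alpha(1-\rho)(P_\gamma(\Lambda^2;1)-2\Lambda P_\gamma(\Lambda^2;\frac12)+\Lambda^2P_\gamma(\Lambda^2;0))]$ with $\gamma=(\tilde\rho-\rho\tilde\rho)/(\rho-\rho\tilde\rho)$. *)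

From Stdlib Require Import Reals.
From Coquelicot Require Import Coquelicot.
Open Scope R_scope.

Definition gplus (g : R) : R := (1 + sqrt g) ^ 2.
Definition gminus (g : R) : R := (1 - sqrt g) ^ 2.

Definition mp_density (g t : R) : R :=
  if Rle_dec (gminus g) t then
    if Rle_dec t (gplus g) then
      / (2 * PI * g * t) * sqrt ((gplus g - t) * (t - gminus g))
    else 0
  else 0.

Definition Pg (g x k : R) : R :=
  RInt (fun t => Rpower t k * mp_density g t) x (gplus g).

Definition gam (rho rt : R) : R := (rt - rho * rt) / (rho - rho * rt).

Definition Mfun (L rho rt alpha : R) : R :=
  let g := gam rho rt in
  rho + rt - rho * rt
  + (1 - rt) * (rho * L ^ 2
     + alpha * (1 - rho) * (Pg g (L ^ 2) 1 - 2 * L * Pg g (L ^ 2) (1/2)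
                            + L ^ 2 * Pg g (L ^ 2) 0)).

From Stdlib Require Import Reals Lra Psatz.
From Coquelicot Require Import Coquelicot.
Open Scope R_scope.

(* For [Λ >= 0] the bracket in [Mfun] is [∫_{Λ²}^{γ₊} (t - 2Λ√t + Λ²) p_γ(t) dt
   = ∫_0^{γ₊} (√t - Λ)₊² p_γ(t) dt], and [(√t - Λ)₊²] is convex in [Λ].  Hence [Mfun] is a
   convex function plus [(1 - ρ̃) ρ Λ²], i.e. strongly convex on [Λ >= 0].  Since [√t p_γ(t)]
   stays bounded on [[0, γ₊]], the integral is Lipschitz in [Λ], so [Mfun] is continuous and
   attains its minimum on [[0, γ₊]]; strong convexity makes the minimiser unique. *)

Lemma gminus_nonneg g : 0 <= gminus g.
Proof. unfold gminus; simpl; rewrite Rmult_1_r; apply Rle_0_sqr. Qed.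

Lemma gminus_lt_gplus g : 0 < g -> gminus g < gplus g.
Proof. intros Hg; pose proof (sqrt_lt_R0 g Hg); unfold gminus, gplus; simpl; nra. Qed.

Lemma ex_RInt_continuous_pos (f : R -> R) a b : 0 < a -> 0 < b ->
  (forall z, 0 < z -> continuous f z) -> ex_RInt f a b.
Proof.
  intros Ha Hb Hf; apply (@ex_RInt_continuous R_CompleteNormedModule).
  intros z Hz; apply Hf; pose proof (Rmin_glb_lt a b 0 Ha Hb); lra.
Qed.

Lemma lipschitz_continuity_pt (f : R -> R) (K : R) :
  0 <= K -> (forall x y, Rabs (f x - f y) <= K * Rabs (x - y)) ->
  forall x0, continuity_pt f x0.
Proof.
  intros HK Hf x0 eps Heps. exists (eps / (K + 1)). split.
  { apply Rdiv_lt_0_compat; lra. }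
  intros x [_ Hx]; simpl in *; unfold R_dist in *.
  pose proof (Hf x x0). pose proof (Rabs_pos (x - x0)).
  assert (Hx' : (K + 1) * Rabs (x - x0) < eps).
  { apply (Rmult_lt_compat_l (K + 1)) in Hx; [|lra].
    replace ((K + 1) * (eps / (K + 1))) with eps in Hx by (field; lra). exact Hx. }
  nra.
Qed.

Lemma minimizer_unique_of_strictly_midpoint_convex (f : R -> R) (a b : R) :
  (forall x y, a <= x <= b -> a <= y <= b -> x <> y -> f ((x + y) / 2) < (f x + f y) / 2) ->
  forall x z, a <= x <= b -> a <= z <= b ->
  (forall y, a <= y <= b -> f x <= f y) -> (forall y, a <= y <= b -> f z <= f y) -> z = x.
Proof.
  intros Hconv x z Hx Hz Hxmin Hzmin.
  destruct (Req_dec z x) as [|Hne]; [assumption|exfalso].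
  pose proof (Hconv x z Hx Hz (fun E => Hne (eq_sym E))).
  pose proof (Hxmin z Hz). pose proof (Hzmin x Hx).
  pose proof (Hxmin ((x + z) / 2) ltac:(lra)). lra.
Qed.

Section MarchenkoPasturDensity.

Variable g : R.
Hypothesis Hg : 0 < g.

Lemma mp_density_eq t :
  mp_density g t = / (2 * PI * g * t) * sqrt ((gplus g - t) * (t - gminus g)).
Proof.
  pose proof (gminus_lt_gplus g Hg). unfold mp_density.
  destruct (Rle_dec (gminus g) t); [destruct (Rle_dec t (gplus g))|].
  - reflexivity.
  - rewrite sqrt_neg_0; [ring|nra].
  - rewrite sqrt_neg_0; [ring|nra].
Qed.

Lemma mp_density_outside t : t <= gminus g \/ gplus g <= t -> mp_density g t = 0.
Proof.
  intros Ht; pose proof (gminus_lt_gplus g Hg).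
  rewrite mp_density_eq, sqrt_neg_0; [ring|destruct Ht; nra].
Qed.

Lemma mp_density_nonpos t : t <= 0 -> mp_density g t = 0.
Proof. intros; apply mp_density_outside; pose proof (gminus_nonneg g); lra. Qed.

Lemma mp_density_nonneg t : 0 <= mp_density g t.
Proof.
  destruct (Rle_dec t 0); [rewrite mp_density_nonpos; lra|].
  rewrite mp_density_eq. apply Rmult_le_pos; [|apply sqrt_pos].
  pose proof PI_RGT_0. left; apply Rinv_0_lt_compat, Rmult_lt_0_compat; [nra|lra].
Qed.

Lemma mp_density_continuous t : t <> 0 -> continuous (mp_density g) t.
Proof.
  intros Ht. pose proof PI_RGT_0.
  apply continuous_ext with
    (f := fun t => / (2 * PI * g * t) * sqrt ((gplus g - t) * (t - gminus g))).
  { intros; symmetry; apply mp_density_eq. }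
  apply (continuous_mult (fun t => / (2 * PI * g * t))).
  - apply continuous_comp with (g := Rinv).
    + apply continuity_pt_filterlim; reg.
    + apply continuous_Rinv. apply Rmult_integral_contrapositive; split; [|exact Ht].
      apply Rgt_not_eq; nra.
  - apply continuous_sqrt_comp, continuity_pt_filterlim; reg.
Qed.

(* At [g = 1] the density blows up like [1/sqrt t] near [0]; what stays bounded is
   [sqrt t * p(t)]. *)
Lemma sqrt_mul_mp_density_le t : 0 <= t <= gplus g ->
  sqrt t * mp_density g t <= sqrt (gplus g) / (2 * PI * g).
Proof.
  intros Ht. pose proof (gminus_nonneg g). pose proof PI_RGT_0.
  assert (HC : 0 < 2 * PI * g) by nra.
  assert (0 <= sqrt (gplus g) / (2 * PI * g)) by (apply Rdiv_le_0_compat; [apply sqrt_pos|lra]).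
  destruct (Req_dec t 0) as [->|Ht0]; [rewrite mp_density_nonpos; lra|].
  rewrite mp_density_eq.
  assert (St : 0 < sqrt t) by (apply sqrt_lt_R0; lra).
  assert (Hq : sqrt ((gplus g - t) * (t - gminus g)) <= sqrt (gplus g) * sqrt t).
  { rewrite <- sqrt_mult by lra. apply sqrt_le_1_alt. nra. }
  replace t with (sqrt t * sqrt t) at 2 by (apply sqrt_sqrt; lra).
  replace (sqrt t * (/ (2 * PI * g * (sqrt t * sqrt t)) * sqrt ((gplus g - t) * (t - gminus g))))
    with (sqrt ((gplus g - t) * (t - gminus g)) / sqrt t / (2 * PI * g)) by (field; lra).
  apply Rmult_le_compat_r; [left; apply Rinv_0_lt_compat; lra|].
  apply Rle_div_l; lra.
Qed.

End MarchenkoPasturDensity.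

Definition pos_part (u : R) : R := (u + Rabs u) / 2.

Lemma pos_part_of_nonpos u : u <= 0 -> pos_part u = 0.
Proof. intros; unfold pos_part; rewrite Rabs_left1 by lra; lra. Qed.

Lemma pos_part_of_nonneg u : 0 <= u -> pos_part u = u.
Proof. intros; unfold pos_part; rewrite Rabs_right by lra; lra. Qed.

Lemma pos_part_bounds u : u <= pos_part u /\ 0 <= pos_part u.
Proof.
  unfold pos_part; pose proof (Rle_abs u); pose proof (Rle_abs (- u)).
  rewrite Rabs_Ropp in *; lra.
Qed.

Lemma pos_part_convex a x y l : 0 <= l <= 1 ->
  pos_part (a - (l * x + (1 - l) * y)) <= l * pos_part (a - x) + (1 - l) * pos_part (a - y).
Proof.
  intros Hl. destruct (pos_part_bounds (a - x)), (pos_part_bounds (a - y)).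
  destruct (Rle_dec (a - (l * x + (1 - l) * y)) 0).
  - rewrite pos_part_of_nonpos by auto; nra.
  - rewrite pos_part_of_nonneg by lra; nra.
Qed.

Definition sq_excess (L t : R) : R := pos_part (sqrt t - L) ^ 2.

Lemma sq_excess_convex L1 L2 l t : 0 <= l <= 1 ->
  sq_excess (l * L1 + (1 - l) * L2) t <= l * sq_excess L1 t + (1 - l) * sq_excess L2 t.
Proof.
  intros Hl. unfold sq_excess. pose proof (pos_part_convex (sqrt t) L1 L2 l Hl).
  destruct (pos_part_bounds (sqrt t - L1)), (pos_part_bounds (sqrt t - L2)),
    (pos_part_bounds (sqrt t - (l * L1 + (1 - l) * L2))).
  set (u := pos_part (sqrt t - L1)) in *. set (v := pos_part (sqrt t - L2)) in *.
  set (w := pos_part (sqrt t - (l * L1 + (1 - l) * L2))) in *.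
  (* square of a nonnegative convex function; the gap is [l (1 - l) (u - v)^2] *)
  assert (w ^ 2 <= (l * u + (1 - l) * v) ^ 2) by (apply pow_incr; lra).
  assert (0 <= l * (1 - l) * (u - v) ^ 2) by (apply Rmult_le_pos; [nra|apply pow2_ge_0]).
  nra.
Qed.

Lemma sq_excess_lipschitz x y t : 0 <= x -> 0 <= y ->
  Rabs (sq_excess x t - sq_excess y t) <= 2 * sqrt t * Rabs (x - y).
Proof.
  intros Hx Hy. pose proof (sqrt_pos t). unfold sq_excess. apply Rabs_le.
  destruct (Rle_dec (sqrt t - x) 0);
    [rewrite (pos_part_of_nonpos (sqrt t - x)) by auto|rewrite (pos_part_of_nonneg (sqrt t - x)) by lra];
  (destruct (Rle_dec (sqrt t - y) 0);
    [rewrite (pos_part_of_nonpos (sqrt t - y)) by auto|rewrite (pos_part_of_nonneg (sqrt t - y)) by lra]);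
  (destruct (Rle_dec x y); [rewrite Rabs_left1 by lra|rewrite Rabs_right by lra]);
  simpl; split; nra.
Qed.

Lemma sq_excess_continuous L t : continuous (sq_excess L) t.
Proof.
  unfold sq_excess. apply continuous_comp with (g := fun u => pos_part (u - L) ^ 2).
  - apply continuous_sqrt.
  - apply continuity_pt_filterlim; unfold pos_part; reg.
Qed.

Lemma sq_excess_below L t : 0 <= L -> t < L ^ 2 -> sq_excess L t = 0.
Proof.
  intros HL Ht. unfold sq_excess. rewrite pos_part_of_nonpos; [simpl; ring|].
  destruct (Rle_dec t 0); [rewrite sqrt_neg_0; lra|].
  rewrite <- (sqrt_pow2 L) by lra. apply Rlt_le, Rlt_minus, sqrt_lt_1_alt; lra.
Qed.

Lemma sq_excess_above L t : 0 <= L -> L ^ 2 <= t -> sq_excess L t = (sqrt t - L) ^ 2.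
Proof.
  intros HL Ht. unfold sq_excess. rewrite pos_part_of_nonneg; [reflexivity|].
  rewrite <- (sqrt_pow2 L) at 1 by lra.
  assert (sqrt (L ^ 2) <= sqrt t) by (apply sqrt_le_1_alt; lra); lra.
Qed.

Lemma sq_excess_0 t : 0 <= t -> sq_excess 0 t = t.
Proof.
  intros Ht. rewrite sq_excess_above by (simpl; lra).
  rewrite Rminus_0_r; apply pow2_sqrt; lra.
Qed.

Definition mp_excess (g L : R) : R :=
  RInt (fun t => sq_excess L t * mp_density g t) 0 (gplus g).

Section MarchenkoPasturExcess.

Variable g : R.
Hypothesis Hg : 0 < g.

Lemma excess_integrand_0_eq t :
  sq_excess 0 t * mp_density g t = / (2 * PI * g) * sqrt ((gplus g - t) * (t - gminus g)).
Proof.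
  pose proof PI_RGT_0. pose proof (gminus_lt_gplus g Hg). pose proof (gminus_nonneg g).
  destruct (Rle_dec t 0).
  - rewrite mp_density_nonpos by auto. rewrite sqrt_neg_0 by nra. ring.
  - rewrite sq_excess_0, mp_density_eq by lra. field. lra.
Qed.

Lemma excess_integrand_continuous L z : 0 <= L ->
  continuous (fun t => sq_excess L t * mp_density g t) z.
Proof.
  intros HL. destruct (Req_dec z 0) as [->|Hz].
  2: { apply (continuous_mult (sq_excess L)); [apply sq_excess_continuous|].
       now apply mp_density_continuous. }
  destruct (Req_dec L 0) as [->|HL0].
  - apply continuous_ext with
      (f := fun t => / (2 * PI * g) * sqrt ((gplus g - t) * (t - gminus g))).
    { intros t; symmetry; apply excess_integrand_0_eq. }
    apply (continuous_mult (fun _ => / (2 * PI * g))); [apply continuous_const|].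
    apply continuous_sqrt_comp, continuity_pt_filterlim; reg.
  - assert (HL2 : 0 < L ^ 2) by (simpl; nra).
    apply continuous_ext_loc with (g := fun _ => 0); [|apply continuous_const].
    exists (mkposreal _ HL2). intros t Ht. change (Rabs (t - 0) < L ^ 2) in Ht.
    apply Rabs_def2 in Ht. rewrite sq_excess_below by lra. now rewrite Rmult_0_l.
Qed.

Lemma ex_RInt_excess_integrand L a b : 0 <= L ->
  ex_RInt (fun t => sq_excess L t * mp_density g t) a b.
Proof.
  intros HL. apply (@ex_RInt_continuous R_CompleteNormedModule).
  intros; now apply excess_integrand_continuous.
Qed.

Lemma Pg_0_1 : Pg g 0 1 = mp_excess g 0.
Proof.
  apply RInt_ext. intros t Ht.
  rewrite Rmin_left, Rmax_right in Ht by (pose proof (gminus_lt_gplus g Hg);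
                                         pose proof (gminus_nonneg g); lra).
  rewrite Rpower_1, sq_excess_0; lra.
Qed.

Lemma Pg_combination_RInt a L : 0 < a ->
  Pg g a 1 - 2 * L * Pg g a (1/2) + L ^ 2 * Pg g a 0 =
  RInt (fun t => (sqrt t - L) ^ 2 * mp_density g t) a (gplus g).
Proof.
  intros Ha. pose proof (gminus_lt_gplus g Hg). pose proof (gminus_nonneg g).
  assert (Hpos : forall t, Rmin a (gplus g) < t -> 0 < t)
    by (intros t Ht; pose proof (Rmin_glb_lt a (gplus g) 0 Ha ltac:(lra)); lra).
  assert (Hcont : forall z, 0 < z -> continuous (mp_density g) z)
    by (intros; apply mp_density_continuous; lra).
  assert (Ex : forall h : R -> R, (forall z, 0 < z -> continuous h z) ->
            ex_RInt (fun t => h t * mp_density g t) a (gplus g)).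
  { intros h Hh. apply ex_RInt_continuous_pos; try lra.
    intros; apply (continuous_mult h); auto. }
  unfold Pg.
  rewrite (RInt_ext (fun t => Rpower t 1 * _) (fun t => t * mp_density g t))
    by (intros t [Ht _]; rewrite Rpower_1 by auto; reflexivity).
  rewrite (RInt_ext (fun t => Rpower t (1/2) * _) (fun t => sqrt t * mp_density g t))
    by (intros t [Ht _]; rewrite <- Rpower_sqrt by auto; f_equal; f_equal; field).
  rewrite (RInt_ext (fun t => Rpower t 0 * _) (fun t => mp_density g t))
    by (intros t [Ht _]; now rewrite Rpower_O, Rmult_1_l by auto).
  assert (E1 : ex_RInt (fun t => t * mp_density g t) a (gplus g))
    by (apply Ex; intros; apply continuous_id).
  assert (E2 : ex_RInt (fun t => sqrt t * mp_density g t) a (gplus g))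
    by (apply Ex; intros; apply continuous_sqrt).
  assert (E3 : ex_RInt (fun t => mp_density g t) a (gplus g)).
  { apply (ex_RInt_ext (fun t => 1 * mp_density g t)); [intros; apply Rmult_1_l|].
    apply Ex; intros; apply continuous_const. }
  symmetry; apply is_RInt_unique.
  eapply is_RInt_ext; [|exact (is_RInt_plus _ _ _ _ _ _
    (is_RInt_minus _ _ _ _ _ _ (RInt_correct _ _ _ E1) (is_RInt_scal _ _ _ (2 * L) _ (RInt_correct _ _ _ E2)))
    (is_RInt_scal _ _ _ (L ^ 2) _ (RInt_correct _ _ _ E3)))].
  intros t [Ht _]. specialize (Hpos t Ht).
  replace (t * mp_density g t) with (sqrt t ^ 2 * mp_density g t)
    by (now rewrite pow2_sqrt by lra).
  unfold plus, minus, opp, scal; simpl; unfold mult, plus; simpl. ring.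
Qed.

Lemma excess_integrand_RInt_below L : 0 <= L ->
  RInt (fun t => sq_excess L t * mp_density g t) 0 (L ^ 2) = 0.
Proof.
  intros HL. rewrite (RInt_ext _ (fun _ => 0)).
  - rewrite RInt_const; unfold scal; simpl; unfold mult; simpl; ring.
  - intros t Ht. rewrite Rmin_left, Rmax_right in Ht by (simpl; nra).
    rewrite sq_excess_below by lra. apply Rmult_0_l.
Qed.

Lemma Pg_combination_eq L : 0 <= L ->
  Pg g (L ^ 2) 1 - 2 * L * Pg g (L ^ 2) (1/2) + L ^ 2 * Pg g (L ^ 2) 0 = mp_excess g L.
Proof.
  intros HL. destruct (Req_dec L 0) as [->|HL0].
  (* [Pg g 0 (1/2)] and [Pg g 0 0] may be junk ([p] is not Riemann integrable at [0] when
     [g = 1]), but both are multiplied by [0]. *)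
  { rewrite <- Pg_0_1. replace (0 ^ 2) with 0 by ring. ring. }
  assert (HL2 : 0 < L ^ 2) by (simpl; nra).
  rewrite Pg_combination_RInt by exact HL2. unfold mp_excess.
  rewrite <- (RInt_Chasles _ 0 (L ^ 2) (gplus g)) by (apply ex_RInt_excess_integrand; lra).
  rewrite excess_integrand_RInt_below by lra.
  unfold plus; simpl; rewrite Rplus_0_l. apply RInt_ext. intros t Ht.
  destruct (Rle_dec (L ^ 2) t).
  - now rewrite sq_excess_above by lra.
  - assert (gplus g < t) by (pose proof (Rmin_l (L ^ 2) (gplus g));
                             pose proof (Rmin_r (L ^ 2) (gplus g));
                             destruct (Rle_dec (L ^ 2) (gplus g));
                             [rewrite Rmin_left in Ht|rewrite Rmin_right in Ht]; lra).
    now rewrite mp_density_outside, !Rmult_0_r by lra.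
Qed.

Lemma mp_excess_convex x y l : 0 <= x -> 0 <= y -> 0 <= l <= 1 ->
  mp_excess g (l * x + (1 - l) * y) <= l * mp_excess g x + (1 - l) * mp_excess g y.
Proof.
  intros Hx Hy Hl. pose proof (gminus_lt_gplus g Hg). pose proof (gminus_nonneg g).
  assert (K := is_RInt_plus _ _ _ _ _ _
    (is_RInt_scal _ _ _ l _ (RInt_correct _ _ _ (ex_RInt_excess_integrand x 0 (gplus g) Hx)))
    (is_RInt_scal _ _ _ (1 - l) _ (RInt_correct _ _ _ (ex_RInt_excess_integrand y 0 (gplus g) Hy)))).
  assert (EQ : RInt (fun t => l * (sq_excess x t * mp_density g t)
                          + (1 - l) * (sq_excess y t * mp_density g t)) 0 (gplus g)
               = l * mp_excess g x + (1 - l) * mp_excess g y)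
    by (apply is_RInt_unique; exact K).
  rewrite <- EQ.
  apply RInt_le; [lra|apply ex_RInt_excess_integrand; nra|eexists; exact K|].
  intros t _. pose proof (sq_excess_convex x y l t Hl). pose proof (mp_density_nonneg g Hg t).
  nra.
Qed.

Lemma mp_excess_lipschitz x y : 0 <= x -> 0 <= y ->
  Rabs (mp_excess g x - mp_excess g y) <=
  2 * gplus g * sqrt (gplus g) / (2 * PI * g) * Rabs (x - y).
Proof.
  intros Hx Hy. pose proof (gminus_lt_gplus g Hg). pose proof (gminus_nonneg g).
  unfold mp_excess. rewrite <- (RInt_minus (V := R_CompleteNormedModule))
    by (apply ex_RInt_excess_integrand; auto).
  replace (2 * gplus g * sqrt (gplus g) / (2 * PI * g) * Rabs (x - y)) with
    ((gplus g - 0) * (2 * Rabs (x - y) * (sqrt (gplus g) / (2 * PI * g)))) by (unfold Rdiv; ring).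
  apply abs_RInt_le_const; [lra| |].
  { apply (ex_RInt_minus (V := R_NormedModule)); apply ex_RInt_excess_integrand; auto. }
  intros t Ht. unfold minus, plus, opp; simpl.
  replace (sq_excess x t * mp_density g t + - (sq_excess y t * mp_density g t))
    with ((sq_excess x t - sq_excess y t) * mp_density g t) by ring.
  pose proof (mp_density_nonneg g Hg t).
  rewrite Rabs_mult, (Rabs_right (mp_density g t)) by lra.
  pose proof (sq_excess_lipschitz x y t Hx Hy).
  pose proof (sqrt_mul_mp_density_le g Hg t Ht). pose proof (Rabs_pos (x - y)).
  apply Rle_trans with (2 * Rabs (x - y) * (sqrt t * mp_density g t)); nra.
Qed.

Lemma mp_excess_abs_continuous x : continuity_pt (fun L => mp_excess g (Rabs L)) x.
Proof.
  pose proof PI_RGT_0. pose proof (gminus_lt_gplus g Hg). pose proof (gminus_nonneg g).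
  assert (HK : 0 <= 2 * gplus g * sqrt (gplus g) / (2 * PI * g)).
  { apply Rdiv_le_0_compat; [|nra]. apply Rmult_le_pos; [lra|apply sqrt_pos]. }
  apply (lipschitz_continuity_pt _ _ HK). intros u v.
  eapply Rle_trans; [apply mp_excess_lipschitz; apply Rabs_pos|].
  apply Rmult_le_compat_l; [exact HK|apply Rabs_triang_inv2].
Qed.

End MarchenkoPasturExcess.

Lemma gam_pos rho rt : 0 < rho < 1 -> 0 < rt < 1 -> 0 < gam rho rt.
Proof.
  intros Hrho Hrt. unfold gam.
  replace (rt - rho * rt) with (rt * (1 - rho)) by ring.
  replace (rho - rho * rt) with (rho * (1 - rt)) by ring.
  apply Rdiv_lt_0_compat; apply Rmult_lt_0_compat; lra.
Qed.

Lemma Mfun_eq rho rt alpha L : 0 < rho < 1 -> 0 < rt < 1 -> 0 <= L ->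
  Mfun L rho rt alpha =
  rho + rt - rho * rt + (1 - rt) * (rho * L ^ 2 + alpha * (1 - rho) * mp_excess (gam rho rt) L).
Proof.
  intros Hrho Hrt HL. unfold Mfun; cbv zeta.
  rewrite Pg_combination_eq by (auto using gam_pos). ring.
Qed.

Lemma Mfun_strongly_convex rho rt alpha x y l :
  0 < rho < 1 -> 0 < rt < 1 -> 0 <= alpha -> 0 <= x -> 0 <= y -> 0 <= l <= 1 ->
  Mfun (l * x + (1 - l) * y) rho rt alpha + (1 - rt) * rho * (l * (1 - l) * (x - y) ^ 2)
  <= l * Mfun x rho rt alpha + (1 - l) * Mfun y rho rt alpha.
Proof.
  intros Hrho Hrt Ha Hx Hy Hl.
  assert (Hz : 0 <= l * x + (1 - l) * y) by nra.
  rewrite !Mfun_eq by auto.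
  pose proof (mp_excess_convex _ (gam_pos rho rt Hrho Hrt) x y l Hx Hy Hl).
  assert (HB : 0 <= (1 - rt) * (alpha * (1 - rho))) by (apply Rmult_le_pos; nra).
  set (F := mp_excess (gam rho rt)) in *.
  assert (HF : (1 - rt) * (alpha * (1 - rho)) * F (l * x + (1 - l) * y)
               <= (1 - rt) * (alpha * (1 - rho)) * (l * F x + (1 - l) * F y))
    by (apply Rmult_le_compat_l; auto).
  nra.
Qed.

Lemma Mfun_convex rho rt alpha x y l :
  0 < rho < 1 -> 0 < rt < 1 -> 0 <= alpha -> 0 <= x -> 0 <= y -> 0 <= l <= 1 ->
  Mfun (l * x + (1 - l) * y) rho rt alpha <= l * Mfun x rho rt alpha + (1 - l) * Mfun y rho rt alpha.
Proof.
  intros Hrho Hrt Ha Hx Hy Hl. pose proof (Mfun_strongly_convex rho rt alpha x y l).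
  assert (0 <= (1 - rt) * rho * (l * (1 - l) * (x - y) ^ 2)).
  { apply Rmult_le_pos; [nra|]. apply Rmult_le_pos; [nra|apply pow2_ge_0]. }
  lra.
Qed.

Lemma Mfun_midpoint_lt rho rt alpha x y :
  0 < rho < 1 -> 0 < rt < 1 -> 0 <= alpha -> 0 <= x -> 0 <= y -> x <> y ->
  Mfun ((x + y) / 2) rho rt alpha < (Mfun x rho rt alpha + Mfun y rho rt alpha) / 2.
Proof.
  intros Hrho Hrt Ha Hx Hy Hxy.
  pose proof (Mfun_strongly_convex rho rt alpha x y (1/2) Hrho Hrt Ha Hx Hy ltac:(lra)).
  replace ((x + y) / 2) with (1/2 * x + (1 - 1/2) * y) by field.
  assert (0 < (1 - rt) * rho * (1/2 * (1 - 1/2) * (x - y) ^ 2)).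
  { apply Rmult_lt_0_compat; [nra|]. apply Rmult_lt_0_compat; [lra|].
    rewrite <- Rsqr_pow2; apply Rsqr_pos_lt; lra. }
  lra.
Qed.

Lemma Mfun_has_minimizer rho rt alpha b : 0 < rho < 1 -> 0 < rt < 1 -> 0 <= b ->
  exists x, 0 <= x <= b /\ forall y, 0 <= y <= b -> Mfun x rho rt alpha <= Mfun y rho rt alpha.
Proof.
  intros Hrho Hrt Hb.
  pose proof (mp_excess_abs_continuous _ (gam_pos rho rt Hrho Hrt)) as Fcont.
  set (F := fun L => mp_excess (gam rho rt) (Rabs L)) in Fcont.
  (* on [L >= 0], [Mfun] agrees with [N], which is continuous on all of [R] *)
  set (N := fun L => rho + rt - rho * rt + (1 - rt) * (rho * L ^ 2 + alpha * (1 - rho) * F L)).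
  assert (HN : forall L, 0 <= L -> N L = Mfun L rho rt alpha)
    by (intros L HL; unfold N, F; rewrite Mfun_eq by auto; rewrite Rabs_right by lra; reflexivity).
  assert (Ncont : forall L, continuity_pt N L).
  { intros L. specialize (Fcont L). clearbody F. unfold N; reg. }
  destruct (continuity_ab_min N 0 b Hb (fun L _ => Ncont L)) as [x [Hmin Hx]].
  exists x; split; [exact Hx|]. intros y Hy. rewrite <- !HN by lra. now apply Hmin.
Qed.

Theorem lemma9 (alpha beta rho : R)
  (Halpha : alpha = 1/2 \/ alpha = 1)
  (Hbeta : 0 < beta <= 1)
  (Hrho : 0 < rho < 1) :
  let rt := beta * rho in
  let gp := gplus (gam rho rt) in
  (* convexity on [0, gamma_+] *)
  (forall x y l, 0 <= x <= gp -> 0 <= y <= gp -> 0 <= l <= 1 ->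
     Mfun (l * x + (1 - l) * y) rho rt alpha
       <= l * Mfun x rho rt alpha + (1 - l) * Mfun y rho rt alpha)
  /\
  (* unique minimiser on [0, gamma_+] *)
  (exists x, (0 <= x <= gp /\
              forall y, 0 <= y <= gp -> Mfun x rho rt alpha <= Mfun y rho rt alpha)
     /\ forall z, (0 <= z <= gp /\
                   forall y, 0 <= y <= gp -> Mfun z rho rt alpha <= Mfun y rho rt alpha)
                  -> z = x).
Proof.
  intros rt gp.
  assert (Hrt : 0 < rt < 1) by (unfold rt; split; nra).
  assert (Ha : 0 <= alpha) by (destruct Halpha; lra).
  assert (Hgp : 0 <= gp).
  { pose proof (gminus_lt_gplus _ (gam_pos rho rt Hrho Hrt)).
    pose proof (gminus_nonneg (gam rho rt)). unfold gp; lra. }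
  split.
  - intros x y l Hx Hy Hl. apply Mfun_convex; lra.
  - destruct (Mfun_has_minimizer rho rt alpha gp Hrho Hrt Hgp) as [x [Hx Hmin]].
    exists x; split; [split; assumption|]. intros z [Hz Hzmin].
    apply (minimizer_unique_of_strictly_midpoint_convex (fun L => Mfun L rho rt alpha) 0 gp);
      auto.
    intros u v Hu Hv Huv. apply Mfun_midpoint_lt; lra.
Qed.
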